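(* For all $n\in\mathbb{Z}^+$ and all vectors $\zeta=(\zeta^j)_{j\in I_n}$, $\xi=(\xi^j)_{j\in I_n}$ of $\mathbb{R}^N$, $$\sup_{p\in I_n}\Big|\sum_{j,k\in I_n}\mathbb{E}^\gamma\big[\tilde J_n^{pj}\tilde J_n^{-pk}\big]\zeta^j\xi^k\Big|\le ab\,\|\zeta\|_2\|\xi\|_2.$$
   Context: For $n\ge0$, $I_n=\{-n,\dots,n\}$, $N=2n+1$, ''$k\bmod I_n$'' is the element of $I_n$ congruent to $k$ mod $N$, and $F_N=e^{2\pi i/N}$. $R_{\mathcal J}:\mathbb{Z}^2\to\mathbb{R}$ satisfies $|R_{\mathcal J}(k,l)|\le a_kb_l$ for positive sequences with $|k|^3a_k\to0$ and $\sum_lb_l<\infty$, $a=\sum_ka_k$, $b=\sum_kb_k$; $R_{\mathcal J}$ is the autocorrelation of a centered stationary Gaussian field on $\mathbb{Z}^2$ with strictly positive spectral density. Under $\gamma$, $J_n=(J_n^{ij})_{i,j\in I_n}$ are centered jointly Gaussian with $\mathbb{E}^\gamma[J_n^{ij}J_n^{kl}]=\frac1NR_{\mathcal J}((k-i)\bmod I_n,(l-j)\bmod I_n)$. $\tilde J_n^{pk}=\sum_{j\in I_n}J_n^{jk}F_N^{-jp}$ for $p,k\in I_n$ (discrete Fourier transform in the first index), with $-p$ understood in $I_n$. *)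

From HB Require Import structures.
From mathcomp Require Import all_boot all_order all_algebra.
From mathcomp Require Import all_classical all_reals all_analysis.
From mathcomp Require Import complex.
Set Implicit Arguments. Unset Strict Implicit. Unset Printing Implicit Defensive.
Import Order.TTheory GRing.Theory Num.Theory.
Local Open Scope classical_set_scope.
Local Open Scope ring_scope.

Definition Nn (n : nat) : nat := n.*2.+1.

(* The index set I_n = {-n,...,n} is represented by 'I_(Nn n):
   the ordinal i stands for the integer i - n. *)
Definition idx {n : nat} (i : 'I_(Nn n)) : int := (i%:Z - n%:Z)%R.

(* "k mod I_n": the element of I_n congruent to k modulo N *)
Definition modI (n : nat) (k : int) : int :=
  (((k + n%:Z) %% (Nn n)%:Z)%Z - n%:Z)%R.

(* -p, understood in I_n (idx (negI p) = - idx p) *)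
Definition negI {n : nat} (p : 'I_(Nn n)) : 'I_(Nn n) := rev_ord p.

Definition FN {R : realType} (n : nat) : R[i] :=
  Complex (cos (pi *+ 2 / (Nn n)%:R)) (sin (pi *+ 2 / (Nn n)%:R)).

Definition tJ {R : realType} {T : Type} (n : nat)
  (J : 'I_(Nn n) -> 'I_(Nn n) -> T -> R) (p k : 'I_(Nn n)) : T -> R[i] :=
  fun w => \sum_(j : 'I_(Nn n)) ((J j k w)%:C%C * FN n ^ (- (idx j * idx p)))%R.

Definition cexpect {d} {T : measurableType d} {R : realType}
  (P : probability T R) (X : T -> R[i]) : R[i] :=
  Complex (fine ('E_P[fun w => complex.Re (X w)])%E) (fine ('E_P[fun w => complex.Im (X w)])%E).

Definition centered_gaussian {d} {T : measurableType d} {R : realType}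
  (P : probability T R) (X : T -> R) : Prop :=
  measurable_fun [set: T] X /\
  exists s : R,
    forall A : set R, measurable A ->
      P (X @^-1` A) = (if s == 0 then \d_(0:R) A else normal_prob 0 s A).

Definition jointly_centered_gaussian {d} {T : measurableType d} {R : realType}
  (P : probability T R) (I : finType) (J : I -> T -> R) : Prop :=
  forall c : I -> R, centered_gaussian P (fun w => \sum_(i : I) c i * J i w).

Definition has_pos_spectral_density {R : realType} (RJ : int -> int -> R) : Prop :=
  exists f : R * R -> R,
    (forall x, 0 < f x) /\
    measurable_fun [set: R * R] f /\
    let D := `[- pi, pi]%classic `*` `[- pi, pi]%classic in
    (lebesgue_measure \x lebesgue_measure)%E.-integrable D (fun x => (f x)%:E) /\
    forall k l : int,
      (RJ k l)%:E = (\int[(lebesgue_measure \x lebesgue_measure)%E]_(x in D)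
                       (f x * cos (k%:~R * x.1 + l%:~R * x.2))%:E)%E /\
      (0%:E = \int[(lebesgue_measure \x lebesgue_measure)%E]_(x in D)
                       (f x * sin (k%:~R * x.1 + l%:~R * x.2))%:E)%E.

Definition l2norm {R : realType} {m : nat} (v : 'I_m -> R) : R :=
  Num.sqrt (\sum_(j : 'I_m) v j ^+ 2).

From HB Require Import structures.
From mathcomp Require Import all_boot all_order all_algebra.
From mathcomp Require Import all_classical all_reals all_analysis.
From mathcomp Require Import complex.
From mathcomp Require Import ring lra measurable_realfun.
Import Order.TTheory GRing.Theory Num.Theory.
Local Open Scope classical_set_scope.
Local Open Scope ring_scope.

(* Expanding both Fourier transforms, E[tJ^{pj} tJ^{-pk}] is a combination of
   the N^2 covariances E[J^{j'j} J^{k'k}] with coefficients of modulus one.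
   Bounding |R_J| by a (.) b (.), and using that k' - j' runs N times over I_n,
   its modulus is at most A b((k - j) mod I_n) with A = sum_{I_n} a <= a.
   The kernel b((k - j) mod I_n) has all row and column sums equal to
   B = sum_{I_n} b <= b, so the Schur test bounds the bilinear form by
   A B ||zeta||_2 ||xi||_2. *)

Section Indices.
Variable n : nat.
Local Notation N := (Nn n).

Lemma idx_inj : injective (@idx n).
Proof. by move=> i j; rewrite /idx => /addIr [] /val_inj. Qed.

Lemma idx_eq_mod (j j' : 'I_N) : (idx j == idx j' %[mod N%:Z])%Z -> j = j'.
Proof.
rewrite /idx eqz_modDr !modz_nat => /eqP [] jj'; apply/val_inj => /=.
by rewrite -(modn_small (ltn_ord j)) -(modn_small (ltn_ord j')) jj'.
Qed.

Definition ordI (k : int) : 'I_N := inord `|((k + n%:Z) %% N%:Z)%Z|%N.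

Lemma idx_ordI k : idx (ordI k) = modI n k.
Proof.
have mod_ge0 : (0 <= (k + n%:Z) %% N%:Z)%Z by rewrite modz_ge0.
rewrite /idx /modI /ordI inordK ?gez0_abs // -ltz_nat gez0_abs //.
by rewrite ltz_pmod.
Qed.

Lemma reindex_modI (V : nmodType) (f : int -> V) (g : 'I_N -> int) :
  (forall j j', (g j == g j' %[mod N%:Z])%Z -> j = j') ->
  \sum_(j : 'I_N) f (modI n (g j)) = \sum_(j : 'I_N) f (idx j).
Proof.
move=> g_inj; rewrite [RHS](reindex_inj (h := fun j => ordI (g j))) /=.
  by apply: eq_bigr => j _; rewrite idx_ordI.
move=> j j' /(congr1 idx); rewrite !idx_ordI /modI => /addIr.
move=> /(congr1 (fun k => (k %% N%:Z)%Z)); rewrite !modz_mod => /eqP.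
by rewrite eqz_modDr; exact: g_inj.
Qed.

Lemma sum_modI_subr (V : nmodType) (f : int -> V) (c : int) :
  \sum_(j : 'I_N) f (modI n (idx j - c)) = \sum_(j : 'I_N) f (idx j).
Proof. by apply: reindex_modI => j j'; rewrite eqz_modDr; exact: idx_eq_mod. Qed.

Lemma sum_modI_subl (V : nmodType) (f : int -> V) (c : int) :
  \sum_(j : 'I_N) f (modI n (c - idx j)) = \sum_(j : 'I_N) f (idx j).
Proof.
apply: reindex_modI => j j'; rewrite eqz_modDl => jj'; apply: idx_eq_mod.
by move: jj'; rewrite !eqz_mod_dvd -rpredN opprB opprK addrC.
Qed.

End Indices.

Section ComplexNorm.
Variable R : rcfType.
Local Open Scope complex_scope.

Lemma normc_sum (I : finType) (f : I -> R[i]) :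
  Normc.normc (\sum_i f i) <= \sum_i Normc.normc (f i).
Proof. exact: (@ler_norm_sum _ (Rcomplex R)). Qed.

Lemma normc_real (r : R) : Normc.normc r%:C = `|r|.
Proof. by rewrite /Normc.normc /= expr0n /= addr0 sqrtr_sqr. Qed.

Lemma normc_exprz_unit (x : R[i]) (z : int) :
  Normc.normc x = 1 -> Normc.normc (x ^ z) = 1.
Proof.
move=> x1; have xn m : Normc.normc (x ^+ m) = 1.
  elim: m => [|m IH]; first by rewrite expr0 Normc.normc1.
  by rewrite exprS Normc.normcM x1 IH mul1r.
by case: z => m; rewrite ?Normc.normcV xn ?invr1.
Qed.

Lemma Re_sum (I : finType) (f : I -> R[i]) :
  complex.Re (\sum_i f i) = \sum_i complex.Re (f i).
Proof. exact: (@raddf_sum _ _ (@complex.Re R : Rcomplex R -> R)). Qed.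

Lemma Im_sum (I : finType) (f : I -> R[i]) :
  complex.Im (\sum_i f i) = \sum_i complex.Im (f i).
Proof. exact: (@raddf_sum _ _ (@complex.Im R : Rcomplex R -> R)). Qed.

End ComplexNorm.

Lemma normc_FN (R : realType) n : Normc.normc (FN n : R[i]) = 1.
Proof. by rewrite /Normc.normc /FN /= cos2Dsin2 sqrtr1. Qed.

Section Expectation.
Context d (T : measurableType d) (R : realType) (P : probability T R).

Lemma Lfun1_expectation_fin (f : T -> R) :
  measurable_fun setT f -> ('E_P[f])%E \is a fin_num -> f \in Lfun P 1.
Proof.
move=> mf Ef; apply/Lfun1_integrable/integrableP; split.
  exact/measurable_EFinP.
by rewrite integral_fin_num_abs //; move: Ef; rewrite unlock.
Qed.

Lemma expectation_fsum (I : finType) (X : I -> T -> R) :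
  (forall i, X i \in Lfun P 1) ->
  ('E_P[fun w => (\sum_i X i w)%R] = \sum_i 'E_P[X i])%E.
Proof.
move=> X1.
have -> : (fun w => \sum_i X i w) = \sum_(Y <- map X (enum I)) Y.
  by apply/funext => w; rewrite sumrfctE big_map big_enum.
rewrite expectation_sum; first by rewrite big_map big_enum.
by move=> Y /mapP [i _ ->].
Qed.

Lemma fine_expectation_lincomb (I : finType) (X : I -> T -> R) (s : I -> R) :
  (forall i, X i \in Lfun P 1) ->
  fine ('E_P[fun w => (\sum_i X i w * s i)%R])%E = \sum_i fine ('E_P[X i])%E * s i.
Proof.
move=> X1; rewrite expectation_fsum => [|i]; last exact: Lfun_scale.
under eq_bigr do rewrite (expectationZl _ (X1 _)).
rewrite -sum_fine => [|i _]; last by rewrite fin_numM // expectation_fin_num.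
by apply: eq_bigr => i _; rewrite fineM ?expectation_fin_num // mulrC.
Qed.

Lemma cexpect_lincomb (I : finType) (X : I -> T -> R) (c : I -> R[i]) :
  (forall i, X i \in Lfun P 1) ->
  cexpect P (fun w => \sum_i (X i w)%:C%C * c i) =
  \sum_i (fine ('E_P[X i])%E)%:C%C * c i.
Proof.
move=> X1.
have ReM (x : R) (z : R[i]) : complex.Re ((x%:C)%C * z) = x * complex.Re z.
  by case: z => ? ? /=; rewrite mul0r subr0.
have ImM (x : R) (z : R[i]) : complex.Im ((x%:C)%C * z) = x * complex.Im z.
  by case: z => ? ? /=; rewrite mul0r addr0.
rewrite /cexpect; set S := \sum_i _.
suff [-> ->] :
    fine ('E_P[fun w => complex.Re (\sum_i (X i w)%:C%C * c i)%R])%E = complex.Re S /\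
    fine ('E_P[fun w => complex.Im (\sum_i (X i w)%:C%C * c i)%R])%E = complex.Im S.
  by case: S.
rewrite /S Re_sum Im_sum; split.
- under eq_fun do rewrite Re_sum; under eq_fun do under eq_bigr do rewrite ReM.
  by rewrite fine_expectation_lincomb //; under [RHS]eq_bigr do rewrite ReM.
- under eq_fun do rewrite Im_sum; under eq_fun do under eq_bigr do rewrite ImM.
  by rewrite fine_expectation_lincomb //; under [RHS]eq_bigr do rewrite ImM.
Qed.

End Expectation.

Lemma jointly_gaussian_measurable {d} {T : measurableType d} {R : realType}
    {P : probability T R} {I : finType} {X : I -> T -> R} :
  jointly_centered_gaussian P X -> forall i, measurable_fun setT (X i).
Proof.
move=> X_gauss i; have [mX _] := X_gauss (fun u => (u == i)%:R).
rewrite (_ : (fun w => _) = X i) in mX => //; apply/funext => w.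
rewrite (bigD1 i) //= eqxx mul1r big1 ?addr0 // => u /negbTE ->.
by rewrite mul0r.
Qed.

Lemma sum_le_esum (R : realType) (I : finType) (U : choiceType)
    (g : I -> U) (f : U -> R) :
  injective g -> (forall u, 0 <= f u) ->
  ((\sum_i f (g i))%:E <= \esum_(u in [set: U]) (f u)%:E)%E.
Proof.
move=> g_inj f_ge0; apply: esum_ge; exists (g @` [set: I]).
  by split => //; apply: finite_image; exact: finite_finset.
rewrite fsbig_image; last by move=> i j _ _; exact: g_inj.
rewrite (_ : [set: I] = [set` enum I]); last first.
  by apply/seteqP; split => i //= _; rewrite mem_enum.
by rewrite -fsbig_seq ?enum_uniq // big_enum /= sumEFin.
Qed.

Section SchurTest.
Variable R : rcfType.

Lemma sqrt_sum_sqr_eq0 (I : finType) (x : I -> R) :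
  Num.sqrt (\sum_i x i ^+ 2) = 0 -> forall i, x i = 0.
Proof.
move/eqP; rewrite sqrtr_eq0 => le0 i.
have sum0 : \sum_i x i ^+ 2 = 0.
  by apply/eqP; rewrite eq_le le0 sumr_ge0 // => j _; exact: sqr_ge0.
have /eqP := psumr_eq0P (fun j _ => sqr_ge0 (x j)) sum0 (i := i) isT.
by rewrite sqrf_eq0 => /eqP.
Qed.

Lemma sum_weighted_le (I J : finType) (w : I -> J -> R) (B : R) (c : I -> R) :
  (forall i, 0 <= c i) -> (forall i, \sum_j w i j <= B) ->
  \sum_i \sum_j w i j * c i <= B * \sum_i c i.
Proof.
move=> c_ge0 row; rewrite mulr_sumr; apply: ler_sum => i _.
by rewrite -mulr_suml; apply: ler_wpM2r.
Qed.

Lemma schur_test (I J : finType) (w : I -> J -> R) (B : R)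
    (x : I -> R) (y : J -> R) :
  (forall i j, 0 <= w i j) ->
  (forall i, \sum_j w i j <= B) -> (forall j, \sum_i w i j <= B) ->
  \sum_i \sum_j w i j * `|x i| * `|y j| <=
    B * (Num.sqrt (\sum_i x i ^+ 2) * Num.sqrt (\sum_j y j ^+ 2)).
Proof.
move=> w_ge0 row col.
set S := \sum_i _; set u := Num.sqrt _; set v := Num.sqrt _.
have normK (K : finType) (z : K -> R) : \sum_k z k ^+ 2 = \sum_k `|z k| ^+ 2.
  by apply: eq_bigr => k _; rewrite real_normK ?num_real.
have sqr_sqrt_sum (K : finType) (z : K -> R) :
    Num.sqrt (\sum_k z k ^+ 2) ^+ 2 = \sum_k `|z k| ^+ 2.
  by rewrite sqr_sqrtr -?normK // sumr_ge0 // => k _; exact: sqr_ge0.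
have u2 : u ^+ 2 = \sum_i `|x i| ^+ 2 by exact: sqr_sqrt_sum.
have v2 : v ^+ 2 = \sum_j `|y j| ^+ 2 by exact: sqr_sqrt_sum.
have := mulr_ge0 (sqrtr_ge0 (\sum_i x i ^+ 2)) (sqrtr_ge0 (\sum_j y j ^+ 2)).
rewrite -/u -/v le_eqVlt => /predU1P [uv0|uv_gt0].
  suff -> : S = 0 by rewrite -uv0 mulr0.
  have /orP [/eqP/sqrt_sum_sqr_eq0 x0|/eqP/sqrt_sum_sqr_eq0 y0] : (u == 0) || (v == 0).
    by rewrite -mulf_eq0 -uv0.
  - by apply: big1 => i _; apply: big1 => j _; rewrite x0 normr0 mulr0 mul0r.
  - by apply: big1 => i _; apply: big1 => j _; rewrite y0 normr0 mulr0.
(* AM-GM: [2 u v |x_i| |y_j| <= |x_i|^2 v^2 + |y_j|^2 u^2] *)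
have amgm i j : 2 * (u * v) * (w i j * `|x i| * `|y j|) <=
    w i j * (`|x i| ^+ 2 * v ^+ 2) + w i j * (`|y j| ^+ 2 * u ^+ 2).
  rewrite -mulrDr (_ : _ * (_ * _ * _) = w i j * (2 * (u * v) * (`|x i| * `|y j|))).
    by apply: ler_wpM2l => //; have := sqr_ge0 (`|x i| * v - `|y j| * u); lra.
  by ring.
have : 2 * (u * v) * S <= B * (u ^+ 2 * v ^+ 2) + B * (v ^+ 2 * u ^+ 2).
  apply: le_trans (_ : _ <= \sum_i \sum_j w i j * (`|x i| ^+ 2 * v ^+ 2) +
      \sum_j \sum_i w i j * (`|y j| ^+ 2 * u ^+ 2)) _.
    rewrite [X in _ <= _ + X]exchange_big -big_split /= mulr_sumr.
    apply: ler_sum => i _; rewrite -big_split mulr_sumr /=.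
    by apply: ler_sum => j _; exact: amgm.
  apply: lerD.
    by rewrite u2 mulr_suml; apply: sum_weighted_le => // i; rewrite mulr_ge0 ?sqr_ge0.
  rewrite v2 mulr_suml; apply: sum_weighted_le (fun j i => w i j) _ _ _ _ => //.
  by move=> j; rewrite mulr_ge0 ?sqr_ge0.
by nra.
Qed.

End SchurTest.

Section FourierCovariance.
Variables (R : realType) (n : nat) (d : measure_display) (T : measurableType d).
Variables (P : probability T R) (J : 'I_(Nn n) -> 'I_(Nn n) -> T -> R).
Variables (RJ : int -> int -> R) (a b : int -> R).
Local Notation N := (Nn n).
Local Notation A := (\sum_(m : 'I_N) a (idx m)).
Local Notation B := (\sum_(m : 'I_N) b (idx m)).

Hypothesis a_ge0 : forall k, 0 <= a k.
Hypothesis b_ge0 : forall l, 0 <= b l.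
Hypothesis RJ_bound : forall k l, `|RJ k l| <= a k * b l.
Hypothesis J_meas : forall i j, measurable_fun setT (J i j).
Hypothesis J_cov : forall i j k l : 'I_N,
  ('E_P[fun w => (J i j w * J k l w)%R])%E =
    (N%:R^-1 * RJ (modI n (idx k - idx i)) (modI n (idx l - idx j)))%:E.

Definition tJ_phase (p j' k' : 'I_N) : R[i] :=
  FN n ^ (- (idx j' * idx p)) * FN n ^ (- (idx k' * idx (negI p))).

Lemma normc_tJ_phase p j' k' : Normc.normc (tJ_phase p j' k') = 1.
Proof. by rewrite Normc.normcM !normc_exprz_unit ?normc_FN ?mulr1. Qed.

Lemma Lfun_J_mul i j k l : (fun w => J i j w * J k l w) \in Lfun P 1.
Proof. by apply: Lfun1_expectation_fin; [exact: measurable_funM | rewrite J_cov]. Qed.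

Lemma cexpect_tJ_mul p j k :
  cexpect P (fun w => tJ J p j w * tJ J (negI p) k w) =
  \sum_(u : 'I_N * 'I_N)
    (fine 'E_P[fun w => J u.1 j w * J u.2 k w])%:C%C * tJ_phase p u.1 u.2.
Proof.
rewrite -cexpect_lincomb; last by move=> u; exact: Lfun_J_mul.
congr cexpect; apply/funext => w.
rewrite /tJ big_distrl -(pair_bigA _ (fun j' k' =>
  (J j' j w * J k' k w)%:C%C * tJ_phase p j' k')) /=.
apply: eq_bigr => j' _; rewrite big_distrr; apply: eq_bigr => k' _ /=.
by rewrite rmorphM mulrACA.
Qed.

Lemma normc_cexpect_tJ_mul_le p j k :
  Normc.normc (cexpect P (fun w => tJ J p j w * tJ J (negI p) k w)) <=
    A * b (modI n (idx k - idx j)).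
Proof.
rewrite cexpect_tJ_mul; apply: le_trans (@normc_sum _ _ _) _.
under eq_bigr do rewrite Normc.normcM normc_real normc_tJ_phase mulr1 J_cov /=.
apply: le_trans (_ : _ <= \sum_(u : 'I_N * 'I_N)
    N%:R^-1 * (a (modI n (idx u.2 - idx u.1)) * b (modI n (idx k - idx j)))) _.
  apply: ler_sum => u _; rewrite normrM ger0_norm ?invr_ge0 //.
  by apply: ler_wpM2l; [rewrite invr_ge0 | exact: RJ_bound].
rewrite -mulr_sumr -mulr_suml.
rewrite -(pair_bigA _ (fun j' k' => a (modI n (idx k' - idx j')))) /=.
under eq_bigr do rewrite sum_modI_subr.
by rewrite sumr_const card_ord -[A *+ N]mulr_natl !mulrA mulVf ?mul1r ?pnatr_eq0.
Qed.

Lemma normc_tJ_bilinear_le p (zeta xi : 'I_N -> R) :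
  Normc.normc (\sum_(j : 'I_N) \sum_(k : 'I_N)
      cexpect P (fun w => tJ J p j w * tJ J (negI p) k w)
        * (zeta j)%:C%C * (xi k)%:C%C) <=
    A * (B * (l2norm zeta * l2norm xi)).
Proof.
apply: le_trans (@normc_sum _ _ _) _.
apply: le_trans (_ : _ <= \sum_(j : 'I_N) \sum_(k : 'I_N)
    A * (b (modI n (idx k - idx j)) * `|zeta j| * `|xi k|)) _.
  apply: ler_sum => j _; apply: le_trans (@normc_sum _ _ _) _; apply: ler_sum => k _.
  rewrite !Normc.normcM !normc_real !mulrA.
  by do 2 apply: ler_wpM2r => //; exact: normc_cexpect_tJ_mul_le.
under eq_bigr do rewrite -mulr_sumr.
rewrite -mulr_sumr; apply: ler_wpM2l; first exact: sumr_ge0.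
apply: schur_test => [j k|j|k].
- exact: b_ge0.
- by rewrite sum_modI_subr.
- by rewrite sum_modI_subl.
Qed.

End FourierCovariance.

Theorem corollaryB8 (R : realType) (RJ : int -> int -> R) (a b : int -> R)
  (a_pos : forall k, 0 < a k) (b_pos : forall l, 0 < b l)
  (RJ_bound : forall k l, `|RJ k l| <= a k * b l)
  (a_decay_pos : (fun m : nat => (m%:R ^+ 3 * a m%:Z)) @ \oo --> 0)
  (a_decay_neg : (fun m : nat => (m%:R ^+ 3 * a (- m%:Z))) @ \oo --> 0)
  (b_summable : (\esum_(l in [set: int]) (b l)%:E < +oo)%E)
  (RJ_spec : has_pos_spectral_density RJ)
  (n : nat) (n_pos : (0 < n)%N)
  (d : measure_display) (T : measurableType d) (P : probability T R)
  (J : 'I_(Nn n) -> 'I_(Nn n) -> T -> R)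
  (J_gauss : jointly_centered_gaussian P (fun ij : 'I_(Nn n) * 'I_(Nn n) => J ij.1 ij.2))
  (J_cov : forall i j k l : 'I_(Nn n),
     ('E_P[fun w => (J i j w * J k l w)%R])%E =
       ((Nn n)%:R^-1 * RJ (modI n (idx k - idx i)) (modI n (idx l - idx j)))%:E)
  (zeta xi : 'I_(Nn n) -> R) :
  ((\big[Num.max/0]_(p : 'I_(Nn n))
      Normc.normc (\sum_(j : 'I_(Nn n)) \sum_(k : 'I_(Nn n))
         cexpect P (fun w => tJ J p j w * tJ J (negI p) k w)
           * (zeta j)%:C%C * (xi k)%:C%C))%:E
   <= (\esum_(k in [set: int]) (a k)%:E) * (\esum_(l in [set: int]) (b l)%:E)
      * (l2norm zeta * l2norm xi)%:E)%E.
Proof.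
have a_ge0 k : 0 <= a k by exact: ltW.
have b_ge0 l : 0 <= b l by exact: ltW.
have J_meas i j : measurable_fun setT (J i j).
  exact: (jointly_gaussian_measurable J_gauss (i, j)).
have l2_ge0 (v : 'I_(Nn n) -> R) : 0 <= l2norm v by exact: sqrtr_ge0.
set A := \sum_(m : 'I_(Nn n)) a (idx m).
set B := \sum_(m : 'I_(Nn n)) b (idx m).
apply: (@le_trans _ _ (A * B * (l2norm zeta * l2norm xi))%:E).
  rewrite lee_fin -mulrA; apply: bigmax_le => [|p _].
    by rewrite !mulr_ge0 ?sumr_ge0.
  exact: normc_tJ_bilinear_le.
have A_le : (A%:E <= \esum_(k in [set: int]) (a k)%:E)%E.
  exact: sum_le_esum (@idx_inj n) a_ge0.
have B_le : (B%:E <= \esum_(l in [set: int]) (b l)%:E)%E.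
  exact: sum_le_esum (@idx_inj n) b_ge0.
rewrite !EFinM lee_pmul ?lee_fin ?mulr_ge0 ?sumr_ge0 //.
by rewrite lee_pmul ?lee_fin ?sumr_ge0.
Qed.
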